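(* Let $\beta=\prod_{j=1}^{r}\sigma_1^{a_j}\sigma_2^{b_j}\in B_3$ with $r\ge 2$ and all $a_j,b_j\ge 1$. Suppose either (1) $\beta$ has two or more trivial syllables, or (2) $\beta$ has a trivial syllable whose two adjacent syllables (taken cyclically, so that $\sigma_1^{a_1}$ and $\sigma_2^{b_r}$ are adjacent) have minimum exponent equal to $2$. Then $\beta$ is conjugate to $[1,3]^{3a}\gamma$ for some integer $a\ge 0$ and some $\gamma\in B_3$ with $\rho(\gamma)<r$. In case (2), or when $\beta$ has two isolated trivial syllables, one has $a\ge 1$. Moreover, $\gamma$ may be chosen as $\gamma=\prod_{j=1}^{s}\sigma_1^{c_j}\sigma_2^{d_j}$ with $s<r$ and $c_j,d_j\ge 2$ for all $j\ge 2$, where: if $s\ge 2$ then $c_1,d_1\ge 1$ and $\gamma$ may be chosen to have either no trivial syllables, or exactly one trivial syllable whose two adjacent syllables each have exponent at least three; if $s=1$ then $c_1,d_1\ge 0$; and if $s=0$ then $\gamma=1$.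
   Context: $B_3$ is the 3-strand braid group with generators $\sigma_1,\sigma_2$; $[1,3]=\sigma_1\sigma_2$. For a word $\beta=\prod_{j=1}^{r}\sigma_1^{e_{2j-1}}\sigma_2^{e_{2j}}$ with $r\ge 1$ and all $e_k\neq 0$, each factor $\sigma_i^{e_k}$ is a syllable; a syllable is trivial if its exponent is $1$; a trivial syllable is isolated if both adjacent syllables (viewed cyclically) are non-trivial. The rank of such $\beta$ is $\rho(\beta)=r$; the identity has rank $0$ and $\sigma_i^a$ ($a\neq 0$) has rank $1$. *)

(* The braid group B_3 is defined by its
   standard presentation: words in sigma_1^{+-1}, sigma_2^{+-1} modulo the
   congruence generated by free cancellation and the braid relation
   s1 s2 s1 = s2 s1 s2. *)
From mathcomp Require Import all_boot.
From Stdlib Require Import Relations.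
Set Implicit Arguments. Unset Strict Implicit. Unset Printing Implicit Defensive.

Inductive gen := S1 | S2.
Definition gen_eqb (x y : gen) := match x, y with S1,S1 | S2,S2 => true | _,_ => false end.

(* a letter is (generator, positive?) ; (g,true) = sigma_g, (g,false) = sigma_g^-1 *)
Definition letter := (gen * bool)%type.
Definition word := seq letter.

Definition inv_word (w : word) : word := rev (map (fun l => (l.1, ~~ l.2)) w).

Inductive braid_step : word -> word -> Prop :=
| bs_free (u v : word) (g : gen) (b : bool) :
    braid_step (u ++ [:: (g, b); (g, ~~ b)] ++ v) (u ++ v)
| bs_rel (u v : word) :
    braid_step (u ++ [:: (S1, true); (S2, true); (S1, true)] ++ v)
               (u ++ [:: (S2, true); (S1, true); (S2, true)] ++ v).

Definition braid_eq : word -> word -> Prop := clos_refl_sym_trans word braid_step.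

Definition braid_conj (x y : word) : Prop :=
  exists w : word, braid_eq (w ++ x ++ inv_word w) y.

Definition spow (g : gen) (n : nat) : word := nseq n (g, true).

Definition syll_word (p : seq (nat * nat)) : word :=
  flatten [seq spow S1 x.1 ++ spow S2 x.2 | x <- p].

Definition twist13_pow (n : nat) : word := flatten (nseq n [:: (S1, true); (S2, true)]).

(* cyclic sequence of syllable exponents a_1 b_1 a_2 b_2 ... a_r b_r *)
Definition exps (p : seq (nat * nat)) : seq nat := flatten [seq [:: x.1; x.2] | x <- p].

Definition prev_exp (e : seq nat) (k : nat) : nat := nth 0 e ((k + size e - 1) %% size e).
Definition next_exp (e : seq nat) (k : nat) : nat := nth 0 e ((k + 1) %% size e).

Definition trivial_syll (e : seq nat) (k : nat) : bool := (k < size e) && (nth 0 e k == 1).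
Definition isolated_syll (e : seq nat) (k : nat) : bool :=
  [&& trivial_syll e k, prev_exp e k != 1 & next_exp e k != 1].
Definition num_trivial (e : seq nat) : nat := count (pred1 1) e.

(* Let Delta = s1 s2 s1, so that Delta^2 = [1,3]^3 is central and Delta
   conjugates s1 to s2. A positive braid is then, up to conjugacy, Delta^k times
   a cyclic alternating word with exponent sequence e. A trivial syllable
   contracts, s^(x+1) t s^(y+1) = Delta t^x s^y: k grows by one and e shortens
   by one, or by three when a neighbour is also trivial, since the zero exponent
   then fuses two syllables. In case (2), or with two trivial syllables neither
   of which has a trivial neighbour, a trivial syllable survives the first
   contraction, so two contractions produce Delta^2 and a >= 1. Contracting until
   no trivial syllable is left and writing Delta^k = [1,3]^(3 (k/2)) Delta^(k mod 2)
   gives gamma; a leftover Delta creates its one trivial syllable, whose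
   neighbours have exponents at least 3. *)

From mathcomp Require Import all_boot zify.
From Stdlib Require Import Relations Classical.
Set Implicit Arguments. Unset Strict Implicit. Unset Printing Implicit Defensive.

(** * Braid words up to equality and conjugacy *)

Lemma braid_eq_refl x : braid_eq x x. Proof. exact: rst_refl. Qed.
Lemma braid_eq_sym x y : braid_eq x y -> braid_eq y x. Proof. exact: rst_sym. Qed.
Lemma braid_eq_trans x y z : braid_eq x y -> braid_eq y z -> braid_eq x z.
Proof. exact: rst_trans. Qed.

Lemma braid_step_ctx l r u v : braid_step u v -> braid_step (l ++ u ++ r) (l ++ v ++ r).
Proof. by case=> [u0 v0 g b|u0 v0]; rewrite -!catA !(catA l u0); constructor. Qed.

Lemma braid_eq_ctx l r u v : braid_eq u v -> braid_eq (l ++ u ++ r) (l ++ v ++ r).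
Proof.
elim=> [x y Hxy|x|x y _|x y z _ IH1 _ IH2].
- exact/rst_step/braid_step_ctx.
- exact: braid_eq_refl.
- exact: braid_eq_sym.
- exact: braid_eq_trans IH1 IH2.
Qed.

Lemma braid_eq_catl l u v : braid_eq u v -> braid_eq (l ++ u) (l ++ v).
Proof. by move/(braid_eq_ctx l [::]); rewrite !cats0. Qed.

Lemma braid_eq_catr r u v : braid_eq u v -> braid_eq (u ++ r) (v ++ r).
Proof. exact: (braid_eq_ctx [::] r). Qed.

Lemma inv_wordK : involutive inv_word.
Proof.
move=> w; rewrite /inv_word map_rev revK -map_comp -[RHS]map_id.
by apply: eq_map => -[g b] /=; rewrite negbK.
Qed.

Lemma inv_word_cat u v : inv_word (u ++ v) = inv_word v ++ inv_word u.
Proof. by rewrite /inv_word map_cat rev_cat. Qed.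

Lemma braid_eq_mulV w : braid_eq (w ++ inv_word w) [::].
Proof.
elim: w => [|[g b] w IH]; first exact: braid_eq_refl.
rewrite /inv_word /= rev_cons -cats1 -/(inv_word w).
apply: braid_eq_trans (_ : braid_eq ([:: (g, b)] ++ [::] ++ [:: (g, ~~ b)]) [::]).
  by have := braid_eq_ctx [:: (g, b)] [:: (g, ~~ b)] IH; rewrite /= -catA.
exact/rst_step/(bs_free [::] [::] g b).
Qed.

Lemma braid_eq_Vmul w : braid_eq (inv_word w ++ w) [::].
Proof. by have := braid_eq_mulV (inv_word w); rewrite inv_wordK. Qed.

Lemma braid_conj_refl x : braid_conj x x.
Proof. by exists [::]; rewrite /= /inv_word /= cats0; exact: braid_eq_refl. Qed.

Lemma braid_conj_eql x y z : braid_eq x y -> braid_conj y z -> braid_conj x z.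
Proof.
by move=> Exy [w Hw]; exists w; apply: braid_eq_trans Hw; exact: braid_eq_ctx.
Qed.

Lemma braid_conj_eqr x y z : braid_conj x y -> braid_eq y z -> braid_conj x z.
Proof. by case=> w Hw Eyz; exists w; exact: braid_eq_trans Hw Eyz. Qed.

Lemma braid_conj_trans x y z : braid_conj x y -> braid_conj y z -> braid_conj x z.
Proof.
case=> w1 H1 [w2 H2]; exists (w2 ++ w1); apply: braid_eq_trans H2.
rewrite inv_word_cat -!catA; apply: braid_eq_catl.
by rewrite !catA; apply: braid_eq_catr; rewrite -!catA.
Qed.

Lemma braid_conj_rot u v : braid_conj (u ++ v) (v ++ u).
Proof.
exists (inv_word u); rewrite inv_wordK !catA.
by have := braid_eq_catr (v ++ u) (braid_eq_Vmul u); rewrite /= !catA.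
Qed.

(** * The half twist Delta *)

Definition swap_gen g := match g with S1 => S2 | S2 => S1 end.
Definition pos g : letter := (g, true).
Definition swap_word (w : word) : word := map (fun l => (swap_gen l.1, l.2)) w.
Definition positive_word (w : word) := all snd w.

Definition delta : word := [:: pos S1; pos S2; pos S1].
Definition delta_pow k : word := flatten (nseq k delta).

Lemma swap_genK : involutive swap_gen. Proof. by case. Qed.

Lemma iter_swap_gen n g : iter n swap_gen g = if odd n then swap_gen g else g.
Proof. by elim: n => //= n ->; case: (odd n); rewrite //= swap_genK. Qed.

Lemma swap_wordK : involutive swap_word.
Proof.
move=> w; rewrite /swap_word -map_comp -[RHS]map_id.
by apply: eq_map => -[g b]; rewrite /= swap_genK.
Qed.

Lemma swap_word_cat u v : swap_word (u ++ v) = swap_word u ++ swap_word v.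
Proof. exact: map_cat. Qed.

Lemma swap_word_spow g n : swap_word (spow g n) = spow (swap_gen g) n.
Proof. by rewrite /swap_word /spow map_nseq. Qed.

Lemma iter_swap_word_double a u : iter (2 * a) swap_word u = u.
Proof. by elim: a => // a IH; rewrite mulnS !iterS IH swap_wordK. Qed.

Lemma positive_word_cat u v : positive_word (u ++ v) = positive_word u && positive_word v.
Proof. exact: all_cat. Qed.

Lemma positive_word_swap u : positive_word (swap_word u) = positive_word u.
Proof. exact: all_map. Qed.

Lemma positive_spow g n : positive_word (spow g n).
Proof. by elim: n. Qed.

Lemma spowD g m n : spow g (m + n) = spow g m ++ spow g n.
Proof. exact: nseqD. Qed.

Lemma spowSr g n : spow g n.+1 = spow g n ++ [:: pos g].
Proof. by rewrite -addn1 spowD. Qed.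

Lemma delta_powSr k : delta_pow k.+1 = delta_pow k ++ delta.
Proof. by rewrite /delta_pow -addn1 nseqD flatten_cat. Qed.

Lemma braid_eq_delta_gen g : braid_eq [:: pos g; pos (swap_gen g); pos g] delta.
Proof.
case: g; first exact: braid_eq_refl.
exact/rst_sym/rst_step/(bs_rel [::] [::]).
Qed.

Lemma braid_eq_delta_letter g : braid_eq (delta ++ [:: pos g]) (pos (swap_gen g) :: delta).
Proof.
case: g; first exact/rst_step/(bs_rel [::] [:: pos S1]).
exact/rst_sym/rst_step/(bs_rel [:: pos S1] [::]).
Qed.

Lemma braid_eq_delta_swap u :
  positive_word u -> braid_eq (delta ++ u) (swap_word u ++ delta).
Proof.
elim: u => [_|[g b] u IH]; first by rewrite cats0; exact: braid_eq_refl.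
case: b => /andP [] // _ /IH {}IH.
rewrite -cat1s catA; apply: braid_eq_trans (braid_eq_catr _ (braid_eq_delta_letter g)) _.
exact: (braid_eq_catl [:: pos (swap_gen g)] IH).
Qed.

Lemma braid_eq_swap_delta u :
  positive_word u -> braid_eq (u ++ delta) (delta ++ swap_word u).
Proof.
rewrite -positive_word_swap => /braid_eq_delta_swap/braid_eq_sym.
by rewrite swap_wordK.
Qed.

Lemma braid_eq_delta_pow_swap k u :
  positive_word u -> braid_eq (delta_pow k ++ u) (iter k swap_word u ++ delta_pow k).
Proof.
elim: k u => [|k IH] u u_pos; first by rewrite /= cats0; exact: braid_eq_refl.
rewrite delta_powSr -catA; apply: braid_eq_trans (braid_eq_catl _ (braid_eq_delta_swap u_pos)) _.
rewrite catA iterSr.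
apply: braid_eq_trans (braid_eq_catr _ (IH _ _)) _; first by rewrite positive_word_swap.
by rewrite -catA -delta_powSr; exact: braid_eq_refl.
Qed.

Lemma braid_conj_delta_pow_rot k u v : positive_word u ->
  braid_conj (delta_pow k ++ u ++ v) (delta_pow k ++ v ++ iter k swap_word u).
Proof.
move=> u_pos; rewrite catA; apply: braid_conj_trans (braid_conj_rot _ _) _.
apply: braid_conj_eql (braid_eq_catl _ (braid_eq_delta_pow_swap k u_pos)) _.
by rewrite catA; exact: braid_conj_rot.
Qed.

Lemma braid_eq_twist13_delta a : braid_eq (twist13_pow (3 * a)) (delta_pow (2 * a)).
Proof.
elim: a => [|a IH]; first exact: braid_eq_refl.
rewrite /twist13_pow !mulnS /= -/(twist13_pow (3 * a)).
have -> : delta_pow (2 + 2 * a) = delta ++ delta ++ delta_pow (2 * a) by [].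
apply: braid_eq_trans (braid_eq_catl (delta ++ [:: pos S2; pos S1; pos S2]) IH) _.
rewrite catA; apply: braid_eq_catr; apply/rst_sym/rst_step.
by have := bs_rel delta [::]; rewrite !cats0.
Qed.

(** * Delta^k times an alternating word *)

Fixpoint alt_word g (e : seq nat) : word :=
  if e is x :: e' then spow g x ++ alt_word (swap_gen g) e' else [::].

Definition delta_alt k g e : word := delta_pow k ++ alt_word g e.

Lemma alt_word_cons g x e : alt_word g (x :: e) = spow g x ++ alt_word (swap_gen g) e.
Proof. by []. Qed.

Lemma positive_alt_word g e : positive_word (alt_word g e).
Proof. by elim: e g => //= x e IH g; rewrite positive_word_cat positive_spow IH. Qed.

Lemma iter_swap_alt_word k g e :
  iter k swap_word (alt_word g e) = alt_word (iter k swap_gen g) e.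
Proof.
elim: k => //= k ->; elim: e (iter k swap_gen g) => //= x e IH g'.
by rewrite swap_word_cat swap_word_spow IH.
Qed.

Lemma iter_swap_spow k g n : iter k swap_word (spow g n) = spow (iter k swap_gen g) n.
Proof. by elim: k => //= k ->; rewrite swap_word_spow. Qed.

Lemma alt_word_cat g e1 e2 :
  alt_word g (e1 ++ e2) = alt_word g e1 ++ alt_word (iter (size e1) swap_gen g) e2.
Proof. by elim: e1 g => //= x e1 IH g; rewrite IH catA -iterSr. Qed.

Lemma alt_word_merge g x z e : alt_word g [:: x, 0, z & e] = alt_word g (x + z :: e).
Proof. by rewrite /= swap_genK spowD -catA. Qed.

Lemma syll_word_cons x y p :
  syll_word ((x, y) :: p) = spow S1 x ++ spow S2 y ++ syll_word p.
Proof. by rewrite /syll_word /= catA. Qed.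

Lemma syll_word_alt p : syll_word p = alt_word S1 (exps p).
Proof. by elim: p => //= -[x y] p IH; rewrite -/(exps p) -IH /syll_word /= catA. Qed.

Lemma delta_alt_rot1 k g x e : ~~ odd (size (x :: e) + k) ->
  braid_conj (delta_alt k g (x :: e)) (delta_alt k (swap_gen g) (rcons e x)).
Proof.
move=> par; rewrite /delta_alt -cats1 alt_word_cat /= cats0.
apply: braid_conj_trans (braid_conj_delta_pow_rot _ _ (positive_spow g x)) _.
rewrite iter_swap_spow -iterSr !iter_swap_gen.
suff -> : odd (size e).+1 = odd k by exact: braid_conj_refl.
by move: par => /=; lia.
Qed.

Lemma delta_alt_rot k g e i : i <= size e -> ~~ odd (size e + k) ->
  braid_conj (delta_alt k g e) (delta_alt k (iter i swap_gen g) (rot i e)).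
Proof.
move=> + par; elim: i => [|i IH] lt_ie; first by rewrite rot0; exact: braid_conj_refl.
apply: braid_conj_trans (IH (ltnW lt_ie)) _; rewrite rotS //.
case def_e: (rot i e) => [|x e']; first by move: (size_rot i e); rewrite def_e /=; lia.
by rewrite rot1_cons; apply: delta_alt_rot1; rewrite -def_e size_rot.
Qed.

(* When |e| + k is odd the first and last syllables use the same generator once
   the last one has been carried around Delta^k, so they fuse. *)
Lemma delta_alt_merge_ends k g y r z : odd (size r + k) ->
  braid_conj (delta_alt k g (y :: rcons r z)) (delta_alt k (iter k swap_gen g) (z + y :: r)).
Proof.
move=> par; rewrite /delta_alt -cats1 -cat_cons alt_word_cat /= cats0.
apply: braid_conj_trans (braid_conj_delta_pow_rot _ _ (positive_alt_word g (y :: r))) _.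
rewrite iter_swap_alt_word /= spowD -!catA -iterS !iter_swap_gen.
suff -> : odd (size r).+1 = odd k by exact: braid_conj_refl.
lia.
Qed.

(* A state (k, g, e) stands for the word Delta^k times the alternating word with
   cyclic exponent sequence e. The parity condition is what makes the cyclic
   rotations of e conjugate (Lemma delta_alt_rot); it is void when |e| <= 1. *)
Definition admissible k (e : seq nat) :=
  all (fun x => 0 < x) e /\ (size e <= 1 \/ ~~ odd (size e + k)).

Lemma admissible_perm k e e' : perm_eq e e' -> admissible k e -> admissible k e'.
Proof. by move=> ee' [e_pos par]; rewrite /admissible -(perm_all _ ee') -(perm_size ee'). Qed.

(** * Contracting trivial syllables *)

(* sigma_g^(x+1) sigma_h sigma_g^(y+1) = sigma_g^x Delta sigma_g^y = Delta sigma_h^x sigma_g^y,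
   where h is the other generator. *)
Lemma delta_alt_contract k g x y rest :
  braid_eq (delta_alt k g [:: x.+1, 1, y.+1 & rest])
           (delta_alt k.+1 (swap_gen g) [:: x, y & rest]).
Proof.
set W := spow g y ++ alt_word (swap_gen g) rest.
have -> : delta_alt k g [:: x.+1, 1, y.+1 & rest] =
          delta_pow k ++ spow g x ++ [:: pos g; pos (swap_gen g); pos g] ++ W.
  by rewrite /delta_alt !alt_word_cons spowSr swap_genK -!catA.
have -> : delta_alt k.+1 (swap_gen g) [:: x, y & rest] =
          delta_pow k ++ delta ++ spow (swap_gen g) x ++ W.
  by rewrite /delta_alt delta_powSr /= swap_genK -catA.
apply/braid_eq_catl; apply: braid_eq_trans (braid_eq_catl _ (braid_eq_catr _ (braid_eq_delta_gen g))) _.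
rewrite -swap_word_spow !(catA _ _ W); apply/braid_eq_catr/braid_eq_swap_delta/positive_spow.
Qed.

Lemma admissible_small k e : all (fun x => 0 < x) e -> size e <= 1 -> admissible k e.
Proof. by split; [|left]. Qed.

Lemma admissible_cons k x e : 0 < x -> all (fun x => 0 < x) e ->
  ~~ odd (size e + k.+1) -> admissible k (x :: e).
Proof. by move=> x_pos e_pos par; split; [rewrite /= x_pos | right; rewrite /=; lia]. Qed.

Lemma delta_alt_contract_generic k g x y rest :
  admissible k [:: x, 1, y & rest] -> 2 <= x -> 2 <= y ->
  braid_conj (delta_alt k g [:: x, 1, y & rest])
             (delta_alt k.+1 (swap_gen g) [:: x.-1, y.-1 & rest]) /\
  admissible k.+1 [:: x.-1, y.-1 & rest].
Proof.
case: x y => [|[|x]] // [|[|y]] // [e_pos par] _ _; split.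
  exact: braid_conj_eql (delta_alt_contract _ _ _ _ _) (braid_conj_refl _).
split; last by right; case: par => /=; lia.
by case/and4P: e_pos.
Qed.

Lemma delta_alt0 k g e : delta_alt k g (0 :: e) = delta_alt k (swap_gen g) e.
Proof. by []. Qed.

(* The contraction leaves a zero exponent, and its two neighbours fuse. *)
Lemma delta_alt_contract_merge k g x y rest :
  admissible k [:: x, 1, y & rest] -> (x == 1) || (y == 1) ->
  exists g' e', braid_conj (delta_alt k g [:: x, 1, y & rest]) (delta_alt k.+1 g' e') /\
    admissible k.+1 e' /\ size e' <= maxn 1 (size rest).
Proof.
move=> [e_pos par] x1_or_y1.
have [x_pos y_pos rest_pos] : [/\ 0 < x, 0 < y & all (fun x => 0 < x) rest].
  by case/and4P: e_pos.
have {}par : ~~ odd (size rest + k.+1) by case: par => /=; lia.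
case: x x_pos x1_or_y1 {e_pos} => [|[|x]] // _; case: y y_pos => [|[|y]] // _ _.
- exists (swap_gen g), rest; split.
    apply: braid_conj_eql (delta_alt_contract k g 0 0 rest) _.
    by rewrite !delta_alt0 swap_genK; exact: braid_conj_refl.
  by split; [split; [|right] | lia].
- have contract := braid_conj_eql (delta_alt_contract k g 0 y.+1 rest).
  case/lastP: rest rest_pos par contract => [|r z] rest_pos par contract.
    exists g, [:: y.+1]; split; last by split; [exact: admissible_small|].
    by apply: contract; rewrite delta_alt0 swap_genK; exact: braid_conj_refl.
  exists (iter k.+1 swap_gen g), (z + y.+1 :: r); split.
    apply: contract; rewrite delta_alt0 swap_genK; apply: delta_alt_merge_ends.
    by move: par; rewrite size_rcons; lia.
  move: rest_pos par; rewrite all_rcons size_rcons => /andP [_ r_pos] par.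
  by split; [apply: admissible_cons r_pos _; lia | rewrite /=; lia].
- have contract := braid_conj_eql (delta_alt_contract k g x.+1 0 rest).
  case: rest rest_pos par contract => [|z r] rest_pos par contract.
    exists (swap_gen g), [:: x.+1]; split; last by split; [exact: admissible_small|].
    by apply: contract; rewrite /delta_alt /= !cats0; exact: braid_conj_refl.
  exists (swap_gen g), (x.+1 + z :: r); split.
    by apply: contract; rewrite /delta_alt alt_word_merge; exact: braid_conj_refl.
  move: rest_pos par => /andP [_ r_pos] par.
  by split; [apply: admissible_cons r_pos _; move: par => /=; lia | rewrite /=; lia].
Qed.

Lemma nth_rot (s : seq nat) i j : i < size s -> j < size s ->
  nth 0 (rot i s) j = nth 0 s ((i + j) %% size s).
Proof.
move=> lt_is lt_js; rewrite /rot nth_cat size_drop; case: ltnP => j_cut.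
  by rewrite nth_drop modn_small //; lia.
rewrite nth_take; last by lia.
by rewrite (_ : i + j = j - (size s - i) + size s) ?modnDr ?modn_small //; lia.
Qed.

Lemma delta_alt_rot_trivial k g e t :
  admissible k e -> 3 <= size e -> trivial_syll e t ->
  exists g' rest,
    braid_conj (delta_alt k g e) (delta_alt k g' [:: prev_exp e t, 1, next_exp e t & rest]) /\
    perm_eq e [:: prev_exp e t, 1, next_exp e t & rest].
Proof.
move=> [_ par] e3 /andP [lt_te /eqP et1].
have {}par : ~~ odd (size e + k) by case: par => //; lia.
set i := (t + size e - 1) %% size e.
have lt_ie : i < size e by rewrite ltn_pmod //; lia.
have nth_roti j : j < 3 -> nth 0 (rot i e) j = nth 0 e ((t + size e - 1 + j) %% size e).
  by move=> j3; rewrite nth_rot ?modnDml //; lia.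
have [rest def_rot] : exists rest, rot i e = [:: prev_exp e t, 1, next_exp e t & rest].
  move: (size_rot i e) (nth_roti 0) (nth_roti 1) (nth_roti 2).
  case: (rot i e) => [|a [|b [|c rest]]] /=; try lia.
  move=> _ -> // -> // -> //; exists rest.
  have E1 : t + size e - 1 + 1 = t + size e by lia.
  have E2 : t + size e - 1 + 2 = t + 1 + size e by lia.
  by rewrite addn0 E1 E2 !modnDr (modn_small lt_te) et1.
exists (iter i swap_gen g), rest; rewrite -def_rot perm_sym perm_rot.
by split; [exact: delta_alt_rot (ltnW lt_ie) par | exact: perm_refl].
Qed.

Definition adjacent_trivial (e : seq nat) t :=
  trivial_syll e t && ((prev_exp e t == 1) || (next_exp e t == 1)).

Definition twice_reducible (e : seq nat) t :=
  [&& trivial_syll e t, 2 <= prev_exp e t, 2 <= next_exp e t &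
      [|| prev_exp e t == 2, next_exp e t == 2 | 2 <= num_trivial e]].

Lemma trivial_syll_index e : 1 \in e -> trivial_syll e (index 1 e).
Proof. by move=> e1; rewrite /trivial_syll index_mem e1 nth_index. Qed.

Lemma delta_alt_reduce_merge k g e t :
  admissible k e -> 4 <= size e -> adjacent_trivial e t ->
  exists g' e', braid_conj (delta_alt k g e) (delta_alt k.+1 g' e') /\
    admissible k.+1 e' /\ size e' + 3 <= size e.
Proof.
move=> adm e4 /andP [tt x1_or_y1].
have [g1 [rest [rot_e perm_e]]] := delta_alt_rot_trivial g adm (ltnW e4) tt.
have [g' [e' [contr [adm' size_e']]]] :=
  delta_alt_contract_merge g1 (admissible_perm perm_e adm) x1_or_y1.
exists g', e'; split; first exact: braid_conj_trans rot_e contr.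
by split=> //; move: e4 size_e'; rewrite (perm_size perm_e) /=; lia.
Qed.

Lemma delta_alt_reduce k g e : admissible k e -> 3 <= size e -> 1 \in e ->
  exists g' e', braid_conj (delta_alt k g e) (delta_alt k.+1 g' e') /\
    admissible k.+1 e' /\ size e' < size e.
Proof.
move=> adm e3 /trivial_syll_index tt; set t := index 1 e in tt *.
have [g1 [rest [rot_e perm_e]]] := delta_alt_rot_trivial g adm e3 tt.
have adm1 := admissible_perm perm_e adm.
have size_e : size e = (size rest).+3 by rewrite (perm_size perm_e).
have [x1_or_y1|] := boolP ((prev_exp e t == 1) || (next_exp e t == 1)).
  have [g' [e' [contr [adm' size_e']]]] := delta_alt_contract_merge g1 adm1 x1_or_y1.
  by exists g', e'; split; [exact: braid_conj_trans rot_e contr | split=> //; lia].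
have [/and4P [x_pos _ y_pos _] _] := adm1.
rewrite negb_or => /andP [/eqP x_ne1 /eqP y_ne1].
have x2 : 2 <= prev_exp e t by lia.
have y2 : 2 <= next_exp e t by lia.
have [contr adm'] := delta_alt_contract_generic g1 adm1 x2 y2.
exists (swap_gen g1), [:: (prev_exp e t).-1, (next_exp e t).-1 & rest].
by split; [exact: braid_conj_trans rot_e contr | split=> //; rewrite size_e].
Qed.

(* After contracting t a trivial syllable survives: a neighbour drops from 2 to 1,
   or another trivial syllable was already present. *)
Lemma delta_alt_reduce_twice k g e t :
  admissible k e -> 4 <= size e -> twice_reducible e t ->
  exists g' e', braid_conj (delta_alt k g e) (delta_alt k.+2 g' e') /\
    admissible k.+2 e' /\ size e' + 2 <= size e.
Proof.
move=> adm e4 /and4P [tt x2 y2 one_left].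
have [g1 [rest [rot_e perm_e]]] := delta_alt_rot_trivial g adm (ltnW e4) tt.
have [contr adm1] := delta_alt_contract_generic g1 (admissible_perm perm_e adm) x2 y2.
have size_e : size e = (size rest).+3 by rewrite (perm_size perm_e).
have one_in : 1 \in [:: (prev_exp e t).-1, (next_exp e t).-1 & rest].
  case/or3P: one_left => [/eqP -> | /eqP -> | two]; rewrite !inE ?eqxx ?orbT //.
  rewrite -has_pred1 has_count; move: two; rewrite /num_trivial (permP perm_e) /=.
  by rewrite (_ : prev_exp e t == 1 = false) 1?(_ : next_exp e t == 1 = false); lia.
have e1_3 : 3 <= size [:: (prev_exp e t).-1, (next_exp e t).-1 & rest] by rewrite /=; lia.
have [g' [e' [contr' [adm' size_e']]]] := delta_alt_reduce (swap_gen g1) adm1 e1_3 one_in.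
exists g', e'; split; first exact: braid_conj_trans rot_e (braid_conj_trans contr contr').
by split=> //; move: size_e'; rewrite /= size_e; lia.
Qed.

Lemma delta_alt_reduce_all k g e : admissible k e ->
  exists m g' e', braid_conj (delta_alt k g e) (delta_alt (k + m) g' e') /\
    admissible (k + m) e' /\ size e' + m <= size e /\ (size e' <= 2) || (1 \notin e').
Proof.
move: {2}(size e) (leqnn (size e)) => n; elim: n e k g => [|n IH] e k g size_e adm;
  have [stop|] := boolP ((size e <= 2) || (1 \notin e));
  try by exists 0, g, e; rewrite !addn0; split; [exact: braid_conj_refl | split].
  by move: size_e; rewrite leqn0 => /nilP ->.
rewrite negb_or -ltnNge negbK => /andP [e3 e_1].
have [g1 [e1 [red1 [adm1 size_e1]]]] := delta_alt_reduce g adm e3 e_1.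
have [m [g2 [e2 [red2 [adm2 [size_e2 stop]]]]]] := IH e1 k.+1 g1 (ltac:(lia)) adm1.
exists m.+1, g2, e2; rewrite addnS -addSn; split; first exact: braid_conj_trans red1 red2.
by split=> //; split=> //; lia.
Qed.

(** * Syllable normal form *)

Fixpoint pair_up (l : seq nat) : seq (nat * nat) :=
  if l is x :: y :: l' then (x, y) :: pair_up l' else [::].

Lemma size_pair_up l : size (pair_up l) = (size l)./2.
Proof.
have [n] := ubnP (size l); elim: n l => // n IH [|x [|y l]] //= lt_ln.
by rewrite IH //; lia.
Qed.

Lemma exps_pair_up l : ~~ odd (size l) -> exps (pair_up l) = l.
Proof.
have [n] := ubnP (size l); elim: n l => // n IH [|x [|y l]] //= lt_ln.
by rewrite negbK => even_l; rewrite /exps /= -/(exps _) IH //; lia.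
Qed.

Lemma size_exps p : size (exps p) = (size p).*2.
Proof. by elim: p => //= -[x y] p IH; rewrite -/(exps p) IH. Qed.

Lemma mem_exps p x : x \in p -> x.1 \in exps p /\ x.2 \in exps p.
Proof.
elim: p => //= -[a b] p IH; rewrite inE -/(exps p) !inE.
by case/orP=> [/eqP -> | /IH [-> ->]]; rewrite ?eqxx ?orbT.
Qed.

Definition syll_normal (q : seq (nat * nat)) :=
  (forall j, 1 <= j < size q -> 2 <= (nth (0,0) q j).1 /\ 2 <= (nth (0,0) q j).2) /\
  (2 <= size q ->
     1 <= (nth (0,0) q 0).1 /\ 1 <= (nth (0,0) q 0).2 /\
     (num_trivial (exps q) = 0 \/
      (num_trivial (exps q) = 1 /\
       forall k, trivial_syll (exps q) k ->
         3 <= prev_exp (exps q) k /\ 3 <= next_exp (exps q) k))).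

Lemma syll_normal_small q : size q <= 1 -> syll_normal q.
Proof. by split=> [j /andP [j1 jq] | q2]; lia. Qed.

Lemma syll_normal_gt1 q : all (fun x => 1 < x) (exps q) -> syll_normal q.
Proof.
move=> /allP q_gt1.
have gt1 x : x \in q -> 1 < x.1 /\ 1 < x.2.
  by case/mem_exps=> /q_gt1 ? /q_gt1 ?.
split=> [j /andP [_ jq] | q2]; first exact/gt1/mem_nth.
have [q01 q02] := gt1 _ (mem_nth (0,0) (ltnW q2)).
split; first exact: ltnW q01; split; first exact: ltnW q02.
left; apply/eqP; rewrite /num_trivial -leqn0 leqNgt -has_count has_pred1.
by apply/negP => /q_gt1.
Qed.

Lemma syll_normal_one_trivial a b c q :
  2 < a -> 2 < b -> 1 < c -> all (fun x => 1 < x) (exps q) ->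
  syll_normal [:: (a, 1), (b, c) & q].
Proof.
move=> a3 b3 c2 /allP q_gt1.
split=> [[|[|j]] // /andP [_ jq] /= | _]; first by split; lia.
  have [/q_gt1 qj1 /q_gt1 qj2] := mem_exps (mem_nth (0,0) (jq : j < size q)).
  exact: conj qj1 qj2.
have no1 : 1 \notin exps q by apply/negP => /q_gt1.
split; first by rewrite /=; lia.
split; first by rewrite /=; lia.
right; split.
  by rewrite /num_trivial /= -/(exps q) (count_memPn no1); lia.
move=> [|[|[|[|k]]]] /andP [/= kq /eqP ek1]; try lia.
  rewrite /prev_exp /next_exp /= -/(exps q).
  by rewrite (_ : 1 + (size (exps q)).+4 - 1 = (size (exps q)).+4) ?modnn //=; lia.
have kq' : k < size (exps q) := kq.
by move: (q_gt1 _ (mem_nth 0 kq')); rewrite ek1.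
Qed.

Lemma all_gt1 e : all (fun x => 0 < x) e -> 1 \notin e -> all (fun x => 1 < x) e.
Proof.
move=> /allP e_pos no1; apply/allP => x ex.
rewrite ltn_neqAle (e_pos x ex) andbT; apply/eqP => x1.
by move: no1; rewrite x1 ex.
Qed.

Lemma delta_alt_S1 k g e : ~~ odd (size e + k) ->
  exists e', braid_conj (delta_alt k g e) (delta_alt k S1 e') /\ perm_eq e e'.
Proof.
case: g => par; first by exists e; split; [exact: braid_conj_refl | exact: perm_refl].
case: e par => [|x e] par; first by exists [::]; split; [exact: braid_conj_refl |].
exists (rot 1 (x :: e)); rewrite perm_sym perm_rot; split=> //.
exact: (delta_alt_rot S2 (isT : 1 <= size (x :: e)) par).
Qed.

Lemma delta_alt_syll_even a g e :
  admissible (2 * a) e -> (size e <= 2) || (1 \notin e) ->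
  exists q, braid_conj (delta_alt (2 * a) g e) (delta_pow (2 * a) ++ syll_word q) /\
    (size q).*2 <= size e + 1 /\ syll_normal q.
Proof.
move=> [e_pos par] stop.
have [odd_e | even_e] := boolP (odd (size e)).
  have [z ->] : exists z, e = [:: z].
    by case: e par odd_e {e_pos stop} => [|z [|y e]] //= par odd_e; [exists z | lia].
  exists (if g is S1 then [:: (z, 0)] else [:: (0, z)]); split.
    by case: g; rewrite /delta_alt /syll_word /= !cats0; exact: braid_conj_refl.
  by split; [case: g | apply: syll_normal_small; case: g].
have par' : ~~ odd (size e + 2 * a) by lia.
have [e' [conj_e perm_e]] := delta_alt_S1 g par'.
have even_e' : ~~ odd (size e') by rewrite -(perm_size perm_e).
exists (pair_up e'); rewrite size_pair_up -(perm_size perm_e) syll_word_alt exps_pair_up //.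
split=> //; split; first by have := odd_double_half (size e); lia.
case/orP: stop => [e2 | no1].
  by apply: syll_normal_small; rewrite size_pair_up -(perm_size perm_e); exact: half_leq e2.
apply/syll_normal_gt1/all_gt1; rewrite exps_pair_up //.
  by rewrite -(perm_all _ perm_e).
by rewrite -(perm_mem perm_e).
Qed.

Lemma delta_spow_syll a g z :
  braid_conj (delta_pow (2 * a) ++ delta ++ spow g z)
    (delta_pow (2 * a) ++ syll_word (if g is S1 then [:: (z.+2, 1)] else [:: (1, z.+2)])).
Proof.
case: g.
  rewrite -[delta ++ _]/([:: pos S1; pos S2] ++ spow S1 z.+1).
  apply: braid_conj_trans (braid_conj_delta_pow_rot _ _ (isT : positive_word [:: pos S1; pos S2])) _.
  by rewrite iter_swap_word_double syll_word_cons (spowSr S1 z.+1) -!catA; exact: braid_conj_refl.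
apply: braid_conj_eql (braid_eq_catl _ (braid_eq_catr _ (braid_eq_sym (braid_eq_delta_gen S2)))) _.
rewrite -[[:: _; _; _] ++ _]/([:: pos S2] ++ pos S1 :: spow S2 z.+1).
apply: braid_conj_trans (braid_conj_delta_pow_rot _ _ (isT : positive_word [:: pos S2])) _.
by rewrite iter_swap_word_double syll_word_cons (spowSr S2 z.+1) -!catA; exact: braid_conj_refl.
Qed.

(* The leftover Delta is absorbed into the last and first syllables; this is
   where the single trivial syllable sigma_2^1 of gamma comes from. *)
Lemma delta_alt_syll_odd_long a x y mid z : ~~ odd (size mid) ->
  braid_conj (delta_alt (2 * a).+1 S1 [:: x, y & rcons mid z])
    (delta_pow (2 * a) ++ syll_word [:: (z.+1, 1), (x.+1, y) & pair_up mid]).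
Proof.
move=> even_mid.
have -> : delta_alt (2 * a).+1 S1 [:: x, y & rcons mid z] =
          delta_pow (2 * a) ++ (delta ++ alt_word S1 [:: x, y & mid]) ++ spow S1 z.
  rewrite /delta_alt delta_powSr -cats1 -!cat_cons alt_word_cat /= iter_swap_gen.
  by rewrite (negbTE even_mid) cats0 -!catA.
apply: braid_conj_trans (braid_conj_delta_pow_rot _ _ _) _.
  by rewrite positive_word_cat positive_alt_word.
rewrite iter_swap_word_double !syll_word_cons syll_word_alt exps_pair_up //.
by rewrite spowSr -!catA; exact: braid_conj_refl.
Qed.

Lemma delta_alt_syll_odd a g e :
  admissible (2 * a).+1 e -> (size e <= 2) || (1 \notin e) ->
  exists q, braid_conj (delta_alt (2 * a).+1 g e) (delta_pow (2 * a) ++ syll_word q) /\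
    (size q).*2 <= size e + 2 /\ syll_normal q.
Proof.
move=> [e_pos par] stop.
have [e1 | e2] := leqP (size e) 1.
  have [h [z alt_e]] : exists h z, alt_word g e = spow h z.
    by case: e e1 {e_pos par stop} => [|z [|]] // _; [exists S1, 0 | exists g, z; rewrite /= cats0].
  exists (if h is S1 then [:: (z.+2, 1)] else [:: (1, z.+2)]).
  rewrite /delta_alt delta_powSr -catA {}alt_e.
  split; first exact: delta_spow_syll.
  by case: h; (split; [exact: leq_addl | exact: syll_normal_small]).
have {}par : ~~ odd (size e + (2 * a).+1) by case: par => //; lia.
have no1 : 1 \notin e by case/orP: stop => //; lia.
have [e' [conj_e perm_e]] := delta_alt_S1 g par.
have e'_gt1 : all (fun x => 1 < x) e'.
  by apply: all_gt1; [rewrite -(perm_all _ perm_e) | rewrite -(perm_mem perm_e)].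
have size_e' := perm_size perm_e.
case: e' e'_gt1 conj_e size_e' {perm_e} => [|x [|y e']]; try (move=> _ _ /= ?; lia).
case/lastP: e' => [|mid z]; first by move=> _ _ /= ?; lia.
rewrite -[[:: x, y & _]]/([:: x; y] ++ rcons mid z) all_cat all_rcons size_cat size_rcons.
move=> /andP [/and3P [x2 y2 _] /andP [z2 mid_gt1]] conj_e size_e'.
have even_mid : ~~ odd (size mid) by move: size_e' par => /= ->; lia.
exists [:: (z.+1, 1), (x.+1, y) & pair_up mid].
split; first exact: braid_conj_trans conj_e (delta_alt_syll_odd_long _ _ _ _ even_mid).
split; first by rewrite size_e' /= size_pair_up; have := odd_double_half (size mid); lia.
by apply: syll_normal_one_trivial => //; rewrite exps_pair_up.
Qed.

Lemma delta_alt_syll k g e : admissible k e -> (size e <= 2) || (1 \notin e) ->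
  exists q, braid_conj (delta_alt k g e) (twist13_pow (3 * k./2) ++ syll_word q) /\
    (size q).*2 <= size e + odd k + 1 /\ syll_normal q.
Proof.
move=> adm stop; set a := k./2.
suff [q [conj_q syll_q]] : exists q,
    braid_conj (delta_alt k g e) (delta_pow (2 * a) ++ syll_word q) /\
    (size q).*2 <= size e + odd k + 1 /\ syll_normal q.
  exists q; split=> //.
  exact: braid_conj_eqr conj_q (braid_eq_catr _ (braid_eq_sym (braid_eq_twist13_delta a))).
have [k_odd | k_even] := boolP (odd k).
  have def_k : k = (2 * a).+1 by rewrite -[LHS]odd_double_half k_odd mul2n.
  rewrite def_k in adm *; have [q [conj_q [size_q syll_q]]] := delta_alt_syll_odd g adm stop.
  by exists q; split=> //; split=> //; lia.
have def_k : k = 2 * a by rewrite -[LHS]odd_double_half (negbTE k_even) mul2n.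
rewrite def_k in adm *; have [q [conj_q [size_q syll_q]]] := delta_alt_syll_even g adm stop.
by exists q; split=> //; split=> //; lia.
Qed.

Lemma delta_alt_normal_form k g e : admissible k e ->
  exists a q, braid_conj (delta_alt k g e) (twist13_pow (3 * a) ++ syll_word q) /\
    k./2 <= a /\ (size q).*2 <= size e + odd k + 1 /\ syll_normal q.
Proof.
move=> adm; have [m [g' [e' [red [adm' [size_e' stop]]]]]] := delta_alt_reduce_all g adm.
have [q [conj_q [size_q syll_q]]] := delta_alt_syll g' adm' stop.
exists (k + m)./2, q; split; first exact: braid_conj_trans red conj_q.
by split; [exact/half_leq/leq_addr | split=> //; lia].
Qed.

(** * Choosing the trivial syllable *)

Lemma exps_gt0 p :
  (forall j, j < size p -> 1 <= (nth (0,0) p j).1 /\ 1 <= (nth (0,0) p j).2) ->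
  all (fun x => 0 < x) (exps p).
Proof.
elim: p => //= -[x y] p IH p_pos; have [/= -> ->] := p_pos 0 isT.
by apply: IH => j; apply: (p_pos j.+1).
Qed.

Lemma neighbours_gt0 e t : all (fun x => 0 < x) e -> trivial_syll e t ->
  0 < prev_exp e t /\ 0 < next_exp e t.
Proof.
move=> /allP e_pos /andP [lt_te _].
by split; apply/e_pos/mem_nth; rewrite ltn_pmod // (leq_ltn_trans _ lt_te).
Qed.

Lemma num_trivial_ge2 e i j :
  i != j -> trivial_syll e i -> trivial_syll e j -> 1 < num_trivial e.
Proof.
move=> ne_ij; wlog lt_ij : i j {ne_ij} / i < j => [wlog_ij ti tj | /andP [_ /eqP ei1] /andP [lt_je /eqP ej1]].
  by case: (ltngtP i j) ne_ij => // [ij|ji] _; [exact: wlog_ij ij ti tj | exact: wlog_ij ji tj ti].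
rewrite /num_trivial -(cat_take_drop j e) count_cat.
have: 1 \in take j e by rewrite -ei1 -(nth_take 0 lt_ij) mem_nth // size_take lt_je.
have: 1 \in drop j e by rewrite (drop_nth 0 lt_je) ej1 mem_head.
by rewrite -!has_pred1 !has_count; lia.
Qed.

Lemma exists_twice_reducible e : all (fun x => 0 < x) e ->
  (exists t, trivial_syll e t /\ minn (prev_exp e t) (next_exp e t) = 2) \/
  (exists t1 t2, t1 <> t2 /\ isolated_syll e t1 /\ isolated_syll e t2) ->
  exists t, twice_reducible e t.
Proof.
move=> e_pos [[t [tt min2]] | [t [t2 [/eqP ne_t [/and3P [tt x1 y1] /and3P [tt2 _ _]]]]]];
  exists t; have [x_pos y_pos] := neighbours_gt0 e_pos tt; rewrite /twice_reducible tt.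
  lia.
by have := num_trivial_ge2 ne_t tt tt2; lia.
Qed.

Lemma adjacent_trivial_of_num_trivial e : all (fun x => 0 < x) e -> 1 < num_trivial e ->
  ~ (exists t, twice_reducible e t) -> exists t, adjacent_trivial e t.
Proof.
move=> e_pos e_1 not_red; set t := index 1 e.
have tt : trivial_syll e t.
  by apply: trivial_syll_index; rewrite -has_pred1 has_count; move: e_1; rewrite /num_trivial; lia.
exists t; rewrite /adjacent_trivial tt /=; apply: contra_notT not_red => ne1; exists t.
have [x_pos y_pos] := neighbours_gt0 e_pos tt.
by rewrite /twice_reducible tt; lia.
Qed.

Theorem proposition2p8 (p : seq (nat * nat)) :
  2 <= size p ->
  (forall j, j < size p -> 1 <= (nth (0,0) p j).1 /\ 1 <= (nth (0,0) p j).2) ->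
  (2 <= num_trivial (exps p) \/
   exists k, trivial_syll (exps p) k /\
             minn (prev_exp (exps p) k) (next_exp (exps p) k) = 2) ->
  exists (a : nat) (q : seq (nat * nat)),
    braid_conj (syll_word p) (twist13_pow (3 * a) ++ syll_word q) /\
    size q < size p /\
    ((exists k, trivial_syll (exps p) k /\
                minn (prev_exp (exps p) k) (next_exp (exps p) k) = 2) \/
     (exists k1 k2, k1 <> k2 /\ isolated_syll (exps p) k1 /\ isolated_syll (exps p) k2) ->
     1 <= a) /\
    (forall j, 1 <= j < size q -> 2 <= (nth (0,0) q j).1 /\ 2 <= (nth (0,0) q j).2) /\
    (2 <= size q ->
       1 <= (nth (0,0) q 0).1 /\ 1 <= (nth (0,0) q 0).2 /\
       (num_trivial (exps q) = 0 \/
        (num_trivial (exps q) = 1 /\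
         forall k, trivial_syll (exps q) k ->
           3 <= prev_exp (exps q) k /\ 3 <= next_exp (exps q) k))).
Proof.
move=> p2 /exps_gt0 e_pos hyp; set e := exps p in e_pos hyp *.
have size_e : size e = (size p).*2 by exact: size_exps.
have adm : admissible 0 e by split=> //; right; rewrite size_e addn0 odd_double.
have e4 : 4 <= size e by rewrite size_e; lia.
rewrite syll_word_alt -/e -[alt_word S1 e]/(delta_alt 0 S1 e).
have [[t red2] | no_red2] := classic (exists t, twice_reducible e t).
  have [g [e' [red [adm' size_e']]]] := delta_alt_reduce_twice S1 adm e4 red2.
  have [a [q [conj_q [a1 [size_q syll_q]]]]] := delta_alt_normal_form g adm'.
  exists a, q; split; first exact: braid_conj_trans red conj_q.
  by split; [lia | split=> [_|//]; exact: a1].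
have e_1 : 1 < num_trivial e.
  by case: hyp => // min2; case: (no_red2 (exists_twice_reducible e_pos (or_introl min2))).
have [t adj] := adjacent_trivial_of_num_trivial e_pos e_1 no_red2.
have [g [e' [red [adm' size_e']]]] := delta_alt_reduce_merge S1 adm e4 adj.
have [a [q [conj_q [_ [size_q syll_q]]]]] := delta_alt_normal_form g adm'.
exists a, q; split; first exact: braid_conj_trans red conj_q.
split; first lia.
by split=> [/(exists_twice_reducible e_pos)/no_red2 [] | //].
Qed.
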